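(* Let $\mathbf{u}$ be fixed by a primitive substitution $\varphi_w$, $w\in\{a,b,\alpha,\beta\}^*$. (1) If $w\in\{a,\beta\}^*$, then $\sigma(\mathbf{u})$ is a standard Sturmian word which is fixed by the substitution $\varphi_{H(w)}$. (2) If $w\in\{b,\alpha\}^*$, then $\sigma(\mathbf{u})$ is a standard Sturmian word which is fixed by the substitution $\varphi_{F(w)}$. (3) If $w\in\{a,\alpha\}^*$ and $\mathbf{u}$ has prefix $1$, then $\sigma(\mathbf{u})$ is fixed by the substitution $\varphi_{H(w)}$. (4) If $w\in\{a,\alpha\}^*$ and $\mathbf{u}$ has prefix $0$, then $\sigma(\mathbf{u})$ is fixed by the substitution $\varphi_{F(w)}$.
   Context: Morphisms on $\{0,1\}^*$: $\varphi_a: 0\mapsto 0, 1 \mapsto 10$; $\varphi_b: 0 \mapsto 0, 1\mapsto 01$; $\varphi_\alpha: 0\mapsto 01, 1\mapsto 1$; $\varphi_\beta: 0\mapsto 10, 1 \mapsto 1$; for $w=w_0\cdots w_{m-1}$, $\varphi_w = \varphi_{w_0}\circ\cdots\circ\varphi_{w_{m-1}}$. $H, F$ are the monoid morphisms on $\{a,b,\alpha,\beta\}^*$ given by $H(a)=H(b)=b$, $H(\alpha)=\alpha$, $H(\beta)=\beta$, and $F(a)=a$, $F(b)=b$, $F(\alpha)=F(\beta)=\beta$. $\sigma$ is the shift $\sigma(u_0u_1u_2\cdots)=u_1u_2\cdots$. A morphism is primitive if some power maps every letter to a word containing every letter; a substitution is a morphism $\psi$ with a letter $c$, $\psi(c)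 = cx$, $x$ nonempty, $|\psi^n(c)|\to\infty$. A standard Sturmian word is a Sturmian word $\mathbf{s}$ over $\{0,1\}$ such that both $0\mathbf{s}$ and $1\mathbf{s}$ are Sturmian (equivalently, the lower two interval exchange coding with parameters $\ell_0,\ell_1,\rho=\ell_1$: $T$ on $[0,\ell_0+\ell_1)$, $T(x)=x+\ell_1$ on $[0,\ell_0)$ coded $0$, $T(x)=x-\ell_0$ on $[\ell_0,\ell_0+\ell_1)$ coded $1$, orbit of $\rho$). Sturmian words are infinite binary words with exactly $n+1$ factors of length $n$ for each $n$. *)

(* Letters of {0,1}: false = 0, true = 1. *)
From mathcomp Require Import all_boot.
Set Implicit Arguments. Unset Strict Implicit. Unset Printing Implicit Defensive.

Inductive gen := Ga | Gb | Galpha | Gbeta.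

(* Finite words over {0,1}: seq bool.  Infinite words: nat -> bool. *)
Definition morph := bool -> seq bool.

Definition mapw (f : morph) (s : seq bool) : seq bool := flatten (map f s).

Definition phi (g : gen) : morph :=
  match g with
  | Ga => fun c => if c then [:: true; false] else [:: false]
  | Gb => fun c => if c then [:: false; true] else [:: false]
  | Galpha => fun c => if c then [:: true] else [:: false; true]
  | Gbeta => fun c => if c then [:: true] else [:: true; false]
  end.

Fixpoint phiw (w : seq gen) : morph :=
  match w with
  | [::] => fun c => [:: c]
  | g :: w' => fun c => mapw (phi g) (phiw w' c)
  end.

Definition Hg (g : gen) : gen :=
  match g with Ga | Gb => Gb | Galpha => Galpha | Gbeta => Gbeta end.
Definition Fg (g : gen) : gen :=
  match g with Ga => Ga | Gb => Gb | Galpha | Gbeta => Gbeta end.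
Definition Hw (w : seq gen) := map Hg w.
Definition Fw (w : seq gen) := map Fg w.

Definition in_a_beta (g : gen) := match g with Ga | Gbeta => true | _ => false end.
Definition in_b_alpha (g : gen) := match g with Gb | Galpha => true | _ => false end.
Definition in_a_alpha (g : gen) := match g with Ga | Galpha => true | _ => false end.

Definition mpow (f : morph) (k : nat) : morph :=
  iter k (fun g c => mapw f (g c)) (fun c => [:: c]).

Definition primitive (f : morph) : Prop :=
  exists k, forall c d : bool, d \in mpow f k c.

Definition substitution (f : morph) : Prop :=
  exists (c : bool) (x : seq bool),
    f c = c :: x /\ x != [::] /\
    (forall M, exists N, forall n, N <= n -> M <= size (mpow f n c)).

Definition pref (u : nat -> bool) (n : nat) : seq bool := mkseq u n.

(* Image of an infinite word under a NON-ERASING morphism f: its n-th letter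
   is the n-th letter of f(u_0 ... u_n) (which has length >= n+1). *)
Definition img (f : morph) (u : nat -> bool) : nat -> bool :=
  fun n => nth false (mapw f (pref u n.+1)) n.

Definition fixed_by (f : morph) (u : nat -> bool) : Prop :=
  forall n, img f u n = u n.

Definition shift (u : nat -> bool) : nat -> bool := fun n => u n.+1.

Definition consw (b : bool) (u : nat -> bool) : nat -> bool :=
  fun n => if n is n'.+1 then u n' else b.

Definition factor (u : nat -> bool) (n : nat) (x : seq bool) : Prop :=
  exists i, x = mkseq (fun j => u (i + j)) n.

Definition sturmian (u : nat -> bool) : Prop :=
  forall n, exists l : seq (seq bool),
    uniq l /\ size l = n.+1 /\ (forall x, x \in l <-> factor u n x).

Definition standard_sturmian (s : nat -> bool) : Prop :=
  sturmian s /\ sturmian (consw false s) /\ sturmian (consw true s).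

(* Write 0 and 1 for false and true.  If phi_g(c) = c x, then x phi_g(p) = phi_g'(p) x for
   every word p, where g' = H(g) if c = 1 and g' = F(g) if c = 0; these conjugations compose,
   so when u = phi_w(u) begins with c, its shift is fixed by phi_H(w), resp. phi_F(w).  For w a
   word over {a, beta} (resp. {b, alpha}) primitivity forces u to begin with 1 (resp. 0), and
   the conjugated word is a word over {b, beta} containing both letters.
   Both phi_b and phi_beta map a letter c to d or d c for a fixed letter d.  Hence a left
   special factor of an image desubstitutes to a strictly shorter left special factor of the
   preimage, and being a prefix lifts back; so every left special factor of a fixed point s of
   such a product is a prefix.  Conversely images of left special prefixes are longer left
   special prefixes.  A word whose left special factors are exactly its prefixes has n + 1
   factors of length n, and prepending a letter adds no new factor, so s is standard Sturmian. *)

From mathcomp Require Import all_boot boolp.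
Set Implicit Arguments. Unset Strict Implicit. Unset Printing Implicit Defensive.

Definition shiftn (k : nat) (x : nat -> bool) : nat -> bool := fun n => x (k + n).
Definition starts (x : nat -> bool) (v : seq bool) := pref x (size v) = v.
Definition occurs (x : nat -> bool) (v : seq bool) := exists i, starts (shiftn i x) v.
Definition left_special (x : nat -> bool) (v : seq bool) :=
  occurs x (false :: v) /\ occurs x (true :: v).

Lemma eq_or_negb (b d : bool) : b = d \/ b = ~~ d.
Proof. by case: b; case: d; [left | right | right | left]. Qed.

Lemma shiftn0 x : shiftn 0 x = x.
Proof. exact: funext. Qed.

Lemma shiftn_add i j x : shiftn i (shiftn j x) = shiftn (j + i) x.
Proof. by apply: funext => n; rewrite /shiftn addnA. Qed.

Lemma size_pref x n : size (pref x n) = n.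
Proof. exact: size_mkseq. Qed.

Lemma pref_add x m n : pref x (m + n) = pref x m ++ pref (shiftn m x) n.
Proof.
rewrite /pref /mkseq iotaD map_cat add0n; congr (_ ++ _).
by rewrite -{1}(addn0 m) iotaDl -map_comp.
Qed.

Lemma pref_S x n : pref x n.+1 = x 0 :: pref (shiftn 1 x) n.
Proof. by rewrite -add1n pref_add. Qed.

Lemma starts_pref x n : starts x (pref x n).
Proof. by rewrite /starts size_pref. Qed.

Lemma starts_cat x a b : starts x (a ++ b) <-> starts x a /\ starts (shiftn (size a) x) b.
Proof.
rewrite /starts size_cat pref_add; split=> [|[-> ->] //].
by move/eqP; rewrite eqseq_cat ?size_pref // => /andP[/eqP -> /eqP ->].
Qed.

Lemma starts_cons x c v : starts x (c :: v) <-> x 0 = c /\ starts (shiftn 1 x) v.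
Proof. by rewrite /starts /= pref_S; split=> [[-> ->] | [-> ->]]. Qed.

Lemma starts_cons2 x a b v :
  starts x [:: a, b & v] <-> [/\ x 0 = a, x 1 = b & starts (shiftn 2 x) v].
Proof.
by rewrite starts_cons starts_cons shiftn_add; split=> [[x0 [x1 xv]] | [x0 x1 xv]].
Qed.

Lemma starts_nth x v k : starts x v -> k < size v -> x k = nth false v k.
Proof. by move=> xv lt_k; rewrite -xv nth_mkseq. Qed.

Lemma starts_prefix x u v : starts x v -> prefix u v -> starts x u.
Proof. by move=> xv /prefixP[r def_v]; move: xv; rewrite def_v => /starts_cat[]. Qed.

Lemma occurs_cons x c v : occurs x (c :: v) <-> exists i, x i = c /\ starts (shiftn i.+1 x) v.
Proof.
by split=> -[i xi]; exists i; move: xi; rewrite starts_cons shiftn_add addn1 /shiftn addn0.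
Qed.

Lemma occurs_infix x u v : occurs x v -> infix u v -> occurs x u.
Proof.
move=> [i xv] /infixP[r [r' def_v]]; exists (i + size r).
by move: xv; rewrite def_v -shiftn_add => /starts_cat[_ /starts_cat[]].
Qed.

Lemma left_special_prefix x u v : left_special x v -> prefix u v -> left_special x u.
Proof.
move=> [x0v x1v] uv.
by split; [apply: occurs_infix x0v _ | apply: occurs_infix x1v _];
  apply: prefixW; rewrite prefix_cons eqxx.
Qed.

Lemma left_specialE d x v : left_special x v <-> occurs x (d :: v) /\ occurs x (~~ d :: v).
Proof. by case: d; rewrite /left_special; split=> -[]. Qed.

Definition nonerasing (f : morph) := forall c, f c != [::].

Definition is_image (f : morph) (t x : nat -> bool) := forall n, starts x (mapw f (pref t n)).

Lemma mapw_cons f c p : mapw f (c :: p) = f c ++ mapw f p.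
Proof. by []. Qed.

Lemma mapw_cat f a b : mapw f (a ++ b) = mapw f a ++ mapw f b.
Proof. by rewrite /mapw map_cat flatten_cat. Qed.

Lemma mapw_comp f g p : mapw f (mapw g p) = mapw (fun c => mapw f (g c)) p.
Proof. by elim: p => //= c p IHp; rewrite mapw_cat IHp. Qed.

Lemma mapw_phiw_nil p : mapw (phiw [::]) p = p.
Proof. by elim: p => // c p IHp; apply: congr1 IHp. Qed.

Lemma size_mapw f p : nonerasing f -> size p <= size (mapw f p).
Proof.
move=> ne_f; elim: p => // c p IHp; rewrite /= size_cat -add1n.
by apply: leq_add IHp; rewrite lt0n size_eq0.
Qed.

Lemma nonerasing_phiw w : nonerasing (phiw w).
Proof.
elim: w => // g w IHw c /=; rewrite -size_eq0 -leqn0 -ltnNge.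
apply: leq_trans (size_mapw _ _); first by rewrite lt0n size_eq0 IHw.
by case: g; case.
Qed.

Lemma is_image_shift f t x k :
  is_image f t x -> is_image f (shiftn k t) (shiftn (size (mapw f (pref t k))) x).
Proof. by move=> tx n; have := tx (k + n); rewrite pref_add mapw_cat => /starts_cat[]. Qed.

Lemma is_image_head f t x : is_image f t x -> starts x (f (t 0)).
Proof. by move/(_ 1); rewrite pref_S /mapw /= cats0. Qed.

Lemma is_image_cons f t x :
  is_image f t x -> is_image f (shiftn 1 t) (shiftn (size (f (t 0))) x).
Proof. by move/(is_image_shift 1); rewrite pref_S /mapw /= cats0. Qed.

Lemma starts_image f t x p : is_image f t x -> starts t p -> starts x (mapw f p).
Proof. by move=> tx <-. Qed.

Lemma occurs_image f t x p : is_image f t x -> occurs t p -> occurs x (mapw f p).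
Proof. by move=> tx [i tp]; eexists; exact: starts_image (is_image_shift i tx) tp. Qed.

Lemma is_imageE f t x : nonerasing f -> is_image f t x <-> x = img f t.
Proof.
move=> ne_f; have long n : n <= size (mapw f (pref t n)).
  by rewrite -{1}(size_pref t n) size_mapw.
split=> [tx | ->].
  by apply: funext => k; rewrite /img (starts_nth (tx k.+1)).
have nth_pref m n k : m <= n -> k < size (mapw f (pref t m)) ->
    nth false (mapw f (pref t m)) k = nth false (mapw f (pref t n)) k.
  by move=> le_mn; rewrite -(subnKC le_mn) pref_add mapw_cat nth_cat => ->.
move=> n; apply: (@eq_from_nth _ false); rewrite size_pref // => k lt_k.
rewrite nth_mkseq // /img; case: (leqP k.+1 n) => [le_kn | /ltnW le_nk].
  exact: nth_pref (long _).
by rewrite (nth_pref n k.+1).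
Qed.

Lemma is_image_img f t : nonerasing f -> is_image f t (img f t).
Proof. by move=> ne_f; apply/is_imageE. Qed.

Lemma is_image_phiw_nil t x : is_image (phiw [::]) t x -> x = t.
Proof.
move/(is_imageE _ _ (nonerasing_phiw _)) => ->; apply: funext => n.
by rewrite /img mapw_phiw_nil nth_mkseq.
Qed.

Lemma fixed_byE f u : nonerasing f -> fixed_by f u <-> is_image f u u.
Proof.
move=> ne_f; rewrite is_imageE //; split=> [fx | def_u n]; last by rewrite {2}def_u.
by apply: funext => n; rewrite fx.
Qed.

Lemma prefix_pref x m n : m <= n -> prefix (pref x m) (pref x n).
Proof. by move=> le_mn; rewrite -(subnKC le_mn) pref_add prefix_prefix. Qed.

Lemma prefix_mapw f p q : prefix p q -> prefix (mapw f p) (mapw f q).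
Proof. by case/prefixP=> r ->; rewrite mapw_cat prefix_prefix. Qed.

Lemma mapw_phiw_cons g L p : mapw (phiw (g :: L)) p = mapw (phi g) (mapw (phiw L) p).
Proof. by rewrite mapw_comp. Qed.

Lemma is_image_phiw_cons g L t x :
  is_image (phiw (g :: L)) t x -> is_image (phi g) (img (phiw L) t) x.
Proof.
move=> tx n; set z := img (phiw L) t.
have tz : is_image (phiw L) t z := is_image_img t (nonerasing_phiw L).
apply: starts_prefix (tx n) _; rewrite mapw_phiw_cons -(tz n).
apply/prefix_mapw/prefix_pref.
by rewrite -{1}(size_pref t n) size_mapw //; apply: nonerasing_phiw.
Qed.

Definition factor_set (x : nat -> bool) (n : nat) : {set n.-tuple bool} :=
  [set v : n.-tuple bool | `[< occurs x v >]].

Lemma factor_setE x y n : (forall v, occurs x v <-> occurs y v) -> factor_set x n = factor_set y n.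
Proof. by move=> occ_xy; apply/setP => v; rewrite !inE; apply/asbool_equiv_eq. Qed.

Lemma factorE x n v : factor x n v <-> size v = n /\ occurs x v.
Proof.
split=> [[i ->] | [<- [i xv]]]; last by exists i; rewrite -[LHS]xv.
by split; [exact: size_mkseq | exists i; rewrite /starts size_mkseq].
Qed.

Lemma sturmian_card_factor_set x : (forall n, #|factor_set x n| = n.+1) -> sturmian x.
Proof.
move=> card_x n; exists (map val (enum (factor_set x n))); split.
  by rewrite map_inj_uniq ?enum_uniq //; apply: val_inj.
split; first by rewrite size_map -cardE card_x.
move=> v; rewrite factorE; split.
  by case/mapP=> t; rewrite mem_enum inE => /asboolP occ_t ->; rewrite size_tuple.
case=> size_v occ_v; apply/mapP; exists (Tuple (introT eqP size_v)) => //.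
by rewrite mem_enum inE; apply/asboolP.
Qed.

Section LeftSpecialPrefixes.

Variable x : nat -> bool.
Hypothesis special_iff_prefix : forall v, left_special x v <-> starts x v.

Lemma occurs_extend v : occurs x v -> exists c, occurs x (c :: v).
Proof.
case=> [[|i] xv].
  by rewrite shiftn0 in xv; case: ((special_iff_prefix v).2 xv); exists false.
by exists (x i); apply/occurs_cons; exists i.
Qed.

(* Every factor extends to the left, and only the prefix, being the left special factor,
   extends in two ways. *)
Lemma card_factor_set n : #|factor_set x n| = n.+1.
Proof.
elim: n => [|n IHn].
  suff -> : factor_set x 0 = setT by rewrite cardsT card_tuple.
  by apply/setP => v; rewrite !inE tuple0; apply/asboolP; exists 0.
pose A c := [set v : n.-tuple bool | `[< occurs x (c :: v) >]].
have cons_inj c : injective (@cons_tuple n bool c).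
  by move=> v v' /(congr1 val) [] /val_inj.
have cons_notin c v : cons_tuple c v \notin cons_tuple (~~ c) @: A (~~ c).
  by apply/imsetP => -[v' _ /(congr1 val) []]; case: c.
have split_factors : factor_set x n.+1 =
    cons_tuple false @: A false :|: cons_tuple true @: A true.
  apply/setP => w; have -> : w = cons_tuple (thead w) (behead_tuple w) by apply: tuple_eta.
  rewrite inE.
  case: (thead w) (cons_notin (thead w) (behead_tuple w)) => /= /negbTE notin.
    by rewrite in_setU notin mem_imset // inE.
  by rewrite in_setU notin mem_imset // inE orbF.
have disjoint_images : cons_tuple false @: A false :&: cons_tuple true @: A true = set0.
  apply/setP => w; rewrite !inE; apply/negP => /andP[/imsetP[v _ ->]].
  exact/negP/cons_notin.
have extensions : A false :|: A true = factor_set x n.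
  apply/setP => v; rewrite !inE; apply/idP/idP.
    by case/orP=> /asboolP occ; apply/asboolP; apply: occurs_infix occ (infix_cons _ _).
  by move/asboolP/occurs_extend => -[[] occ]; apply/orP; [right | left]; apply/asboolP.
have special : A false :&: A true = [set Tuple (introT eqP (size_pref x n))].
  apply/setP => v; rewrite !inE; apply/andP/eqP => [[/asboolP occ0 /asboolP occ1] | ->].
    have /special_iff_prefix xv : left_special x v by split.
    by apply: val_inj; rewrite /= -xv size_tuple.
  by have [occ0 occ1] := (special_iff_prefix _).2 (starts_pref x n); split; apply/asboolP.
have := cardsUI (cons_tuple false @: A false) (cons_tuple true @: A true).
rewrite -split_factors disjoint_images cards0 addn0 !card_imset // -cardsUI.
by rewrite extensions special cards1 IHn addn1.
Qed.

Lemma occurs_consw c v : occurs (consw c x) v <-> occurs x v.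
Proof.
split=> [[[|i] xv] | [i xv]]; last by exists i.+1.
  case: v xv => [|c' v]; first by exists 0.
  by rewrite shiftn0 => /starts_cons[/= <- /(special_iff_prefix v).2[]]; case: c.
by exists i.
Qed.

Theorem standard_sturmian_of_left_special : standard_sturmian x.
Proof.
have sturm y : (forall v, occurs y v <-> occurs x v) -> sturmian y.
  move=> occ_yx; apply: sturmian_card_factor_set => n.
  by rewrite (factor_setE n occ_yx) card_factor_set.
by split; [|split]; apply: sturm => // v; apply: occurs_consw.
Qed.

End LeftSpecialPrefixes.

Definition phid (d : bool) : morph := fun c => if c == d then [:: d] else [:: d; c].

Definition left_special_prefix_lt x n := forall v, size v < n -> left_special x v -> starts x v.

Section PhiD.

Variable d : bool.

Lemma image_phid_head t x : is_image (phid d) t x -> x 0 = d.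
Proof. by move/is_image_head; rewrite /phid; case: eqP => _ /starts_cons[]. Qed.

Lemma image_phid_eq t x : is_image (phid d) t x -> t 0 = d ->
  is_image (phid d) (shiftn 1 t) (shiftn 1 x).
Proof. by move/is_image_cons; rewrite /phid => + t0; rewrite t0 eqxx. Qed.

Lemma image_phid_neq t x : is_image (phid d) t x -> t 0 = ~~ d ->
  x 1 = ~~ d /\ is_image (phid d) (shiftn 1 t) (shiftn 2 x).
Proof.
move=> tx t0; have phid_t0 : phid d (t 0) = [:: d; ~~ d] by rewrite /phid t0; case: d.
split; last by move/is_image_cons: tx; rewrite phid_t0.
by move: (is_image_head tx); rewrite phid_t0 => /starts_cons2[].
Qed.

(* Position i.+1 begins a block (a d there always does, and a ~~ d is always followed by a new
   block); the block ending at i is the image of its own last letter x i. *)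
Lemma image_phid_cut t x i : is_image (phid d) t x -> x i = ~~ d \/ x i.+1 = d ->
  exists j, t j = x i /\ is_image (phid d) (shiftn j.+1 t) (shiftn i.+1 x).
Proof.
elim/ltn_ind: i t x => i IH t x tx xi; have x0 := image_phid_head tx.
have [t0 | t0] := eq_or_negb (t 0) d.
  case: i IH xi => [|i] IH xi; first by exists 0; rewrite t0 x0; split=> //; apply: image_phid_eq.
  have [j [tj tx']] := IH i (ltnSn i) _ _ (image_phid_eq tx t0) xi.
  by exists j.+1; split=> //; move: tx'; rewrite !shiftn_add !add1n.
have [x1 tx2] := image_phid_neq tx t0.
case: i IH xi => [|[|i]] IH xi.
- by move: xi; rewrite x0 x1; case: (d) => -[].
- by exists 0; rewrite t0 x1.
have [j [tj tx']] := IH i (leqW (ltnSn i)) _ _ tx2 xi.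
by exists j.+1; split=> //; move: tx'; rewrite !shiftn_add !add1n.
Qed.

(* If v begins an image under [phid d], then [desub v] is the prefix of the preimage whose image
   is v, possibly without a last letter d (the start of the next block); the first letter of v
   is not inspected. *)
Fixpoint desub (v : seq bool) : seq bool :=
  match v with
  | _ :: ((c :: r) as v') => if c == d then d :: desub v' else c :: desub r
  | _ => [::]
  end.

Lemma desub_cons2 c c' r :
  desub [:: c, c' & r] = if c' == d then d :: desub (c' :: r) else c' :: desub r.
Proof. by []. Qed.

Lemma size_desub v : size (desub v) <= (size v).-1.
Proof.
elim: {v}(size v) {-2}v (leqnn (size v)) => [|n IHn] [|c [|c' r]] // le_v.
rewrite desub_cons2; case: eqP => _; first exact: (IHn (c' :: r) le_v).
by rewrite /= ltnS (leq_trans (IHn r (ltnW le_v))) ?leq_pred.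
Qed.

Lemma image_phid_desub y X v : is_image (phid d) y X -> starts X v ->
  starts y (desub v) /\ forall z Z, is_image (phid d) z Z -> starts z (desub v) -> starts Z v.
Proof.
elim: {v}(size v) {-2}v (leqnn (size v)) y X => [|n IHn] [|c [|c' r]] // le_v y X yX.
- move/starts_cons=> [X0 _]; split=> // z Z zZ _; apply/starts_cons.
  by rewrite (image_phid_head zZ) -X0 (image_phid_head yX).
case/starts_cons2=> X0 X1 Xr; rewrite desub_cons2 -X0 (image_phid_head yX).
have [y0 | y0] := eq_or_negb (y 0) d.
  have yX1 := image_phid_eq yX y0.
  have {X1}c'd : c' = d by rewrite -X1; apply: image_phid_head yX1.
  subst c'; have [|y_q Z_v] := IHn (d :: r) le_v _ _ yX1.
    by rewrite starts_cons shiftn_add; split=> //; apply: image_phid_head yX1.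
  rewrite eqxx; split=> [|z Z zZ /starts_cons[z0 z_q]]; first by apply/starts_cons.
  apply/starts_cons; split; first exact: image_phid_head zZ.
  exact: Z_v (image_phid_eq zZ z0) z_q.
have [X1' yX2] := image_phid_neq yX y0.
have {X1}c'nd : c' = ~~ d by rewrite -X1.
have [y_q Z_v] := IHn r (ltnW le_v) _ _ yX2 Xr.
subst c'; have -> : (~~ d == d) = false by case: (d).
split=> [|z Z zZ /starts_cons[z0 z_q]]; first by apply/starts_cons.
have [Z1 zZ2] := image_phid_neq zZ z0.
by apply/starts_cons2; split=> //; [apply: image_phid_head zZ | apply: Z_v zZ2 z_q].
Qed.

Lemma image_phid_next t x i : is_image (phid d) t x -> x i = ~~ d -> x i.+1 = d.
Proof.
move=> tx xi; have [j [_ tx']] := image_phid_cut tx (or_introl xi).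
by have := image_phid_head tx'; rewrite /shiftn addn0.
Qed.

Lemma occurs_phid_desub t x c v : is_image (phid d) t x -> occurs x [:: c, d & v] ->
  occurs t (c :: desub (d :: v)) /\
  forall z Z, is_image (phid d) z Z -> starts z (desub (d :: v)) -> starts Z (d :: v).
Proof.
move=> tx /occurs_cons[i [xi xv]].
have x_next : x i.+1 = d by case/starts_cons: xv; rewrite /shiftn addn0.
have [j [tj tx']] := image_phid_cut tx (or_intror x_next).
have [t_q Z_v] := image_phid_desub tx' xv.
by split=> //; apply/occurs_cons; exists j; rewrite tj xi.
Qed.

(* Both left extensions of a nonempty left special factor v of the image start right after a
   block, so they desubstitute to left extensions of the shorter word [desub v]. *)
Lemma left_special_prefix_lt_phid t x n : is_image (phid d) t x ->
  left_special_prefix_lt t n -> left_special_prefix_lt x n.+1.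
Proof.
move=> tx tn [|c v] // lt_v /(left_specialE d)[occ_d occ_nd].
have c_d : c = d.
  case/occurs_cons: occ_nd => i [xi /starts_cons[]].
  by rewrite /shiftn addn0 (image_phid_next tx xi) => <-.
subst c; have [occ_q Z_v] := occurs_phid_desub tx occ_d.
have [occ_q' _] := occurs_phid_desub tx occ_nd.
apply: (Z_v _ _ tx); apply: tn; first exact: leq_ltn_trans (size_desub (d :: v)) lt_v.
by apply/(left_specialE d).
Qed.

Lemma left_special_phid t x v : is_image (phid d) t x ->
  left_special t v -> left_special x (mapw (phid d) v).
Proof.
move=> tx /(left_specialE d)[occ_d occ_nd]; apply/(left_specialE d); split.
  by have := occurs_image tx occ_d; rewrite mapw_cons /phid eqxx.
have := occurs_image tx occ_nd; rewrite mapw_cons /phid (_ : (~~ d == d) = false).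
  by move/occurs_infix; apply; apply: infix_cons.
by case: (d).
Qed.

End PhiD.

Definition in_b_beta (g : gen) := match g with Gb | Gbeta => true | _ => false end.
Definition lead (g : gen) := if g is Gbeta then true else false.

Lemma phi_b_beta g : in_b_beta g -> phi g = phid (lead g).
Proof. by case: g => // _; apply: funext; case. Qed.

Lemma left_special_prefix_lt_phiw L t x n : all in_b_beta L -> is_image (phiw L) t x ->
  left_special_prefix_lt t n -> left_special_prefix_lt x (n + size L).
Proof.
elim: L x => [|g L IHL] x; first by move=> _ /is_image_phiw_nil ->; rewrite addn0.
case/andP=> g_b_beta L_b_beta tx tn; rewrite addnS.
have := is_image_phiw_cons tx; rewrite phi_b_beta // => zx.
exact: left_special_prefix_lt_phid zx (IHL _ L_b_beta (is_image_img _ (nonerasing_phiw L)) tn).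
Qed.

Lemma left_special_phiw L t x v : all in_b_beta L -> is_image (phiw L) t x ->
  left_special t v -> left_special x (mapw (phiw L) v).
Proof.
elim: L x => [|g L IHL] x; first by move=> _ /is_image_phiw_nil ->; rewrite mapw_phiw_nil.
case/andP=> g_b_beta L_b_beta tx tv; rewrite mapw_phiw_cons phi_b_beta //.
have := is_image_phiw_cons tx; rewrite phi_b_beta // => zx.
exact: left_special_phid zx (IHL _ L_b_beta (is_image_img _ (nonerasing_phiw L)) tv).
Qed.

Definition moves (c : bool) (g : gen) := phi g c != [:: c].

Lemma mem_mapw f p c e : e \in f c -> c \in p -> e \in mapw f p.
Proof. by move=> e_fc c_p; apply/flattenP; exists (f c) => //; apply: map_f. Qed.

Lemma phiw_rcons L c : all in_b_beta L -> exists r, phiw L c = rcons r c.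
Proof.
elim: L => [|g L IHL]; first by exists [::].
case/andP=> g_b_beta /IHL[r def_r] /=; rewrite def_r -cats1 mapw_cat phi_b_beta //.
have [r' ->] : exists r', mapw (phid (lead g)) [:: c] = rcons r' c.
  by rewrite /mapw /= cats0 /phid; case: eqP => [->|_]; [exists [::] | exists [:: lead g]].
by exists (mapw (phid (lead g)) r ++ r'); rewrite -!cats1 catA.
Qed.

Lemma phiw_lead g L c : all in_b_beta (g :: L) -> exists r, phiw (g :: L) c = lead g :: r.
Proof.
case/andP=> g_b_beta _ /=; have := nonerasing_phiw L c.
case: (phiw L c) => // c' p _; rewrite mapw_cons phi_b_beta // /phid.
by case: eqP; eexists.
Qed.

Lemma mem_phiw L c e : all in_b_beta L -> has (moves (~~ e)) L -> e \in phiw L c.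
Proof.
elim: L => //= g L IHL /andP[g_b_beta L_b_beta] /orP[g_moves | L_moves].
  have [r ->] : exists r, mapw (phi g) (phiw L c) = lead g :: r.
    by apply: (phiw_lead c); apply/andP.
  by rewrite inE; case: g g_b_beta g_moves {IHL} => //; case: e.
rewrite phi_b_beta //; apply: mem_mapw (IHL L_b_beta L_moves).
by rewrite /phid; case: eqP => [->|_]; rewrite !inE eqxx ?orbT.
Qed.

Section BBetaFixedPoint.

Variables (g : gen) (L : seq gen) (s : nat -> bool).
Hypotheses (b_beta : all in_b_beta (g :: L)) (moving : forall c, has (moves c) (g :: L))
  (s_fixed : is_image (phiw (g :: L)) s s).

Lemma left_special_starts v : left_special s v -> starts s v.
Proof.
suff prefix_lt n : left_special_prefix_lt s n by apply: prefix_lt.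
elim: n => // n IHn v' lt_v'; apply: (left_special_prefix_lt_phiw b_beta s_fixed IHn).
by apply: leq_trans lt_v' _; rewrite /= addnS ltnS leq_addr.
Qed.

Lemma phiw_head c : exists r, phiw (g :: L) c = s 0 :: r.
Proof.
have lead_s : s 0 = lead g.
  have [r def_r] := phiw_lead (s 0) b_beta.
  by have := is_image_head s_fixed; rewrite def_r => /starts_cons[].
by rewrite lead_s; apply: phiw_lead.
Qed.

(* Each image ends with its letter c and starts with [s 0], so c (s 0) is a factor of s. *)
Lemma left_special_head : left_special s [:: s 0].
Proof.
suff occ c : occurs s [:: c; s 0] by split; apply: occ.
have /occurs_cons[i [si _]] : occurs s [:: c].
  apply: (@occurs_infix _ _ (phiw (g :: L) (s 0))).
    by exists 0; rewrite shiftn0; apply: is_image_head.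
  by rewrite infix1s; apply: mem_phiw.
have occ_pair : occurs s [:: s i; s i.+1].
  by exists i; apply/starts_cons2; rewrite /shiftn addn0 addn1.
have := occurs_image s_fixed occ_pair; rewrite !mapw_cons [mapw _ [::]]/= cats0 si.
have [r ->] := phiw_rcons c b_beta; have [r' ->] := phiw_head (s i.+1).
by move/occurs_infix; apply; apply/infixP; exists r, r'; rewrite -cats1 -catA.
Qed.

Lemma left_special_pref n : left_special s (pref s n).
Proof.
have long c : 1 < size (phiw (g :: L) c).
  have [r def_r] := phiw_head c; have := @mem_phiw _ c (~~ s 0) b_beta (moving _).
  by rewrite def_r inE; case: r {def_r} => //; case: (s 0).
suff step m : left_special s (pref s m.+1).
  by case: n => [|n] //; apply: left_special_prefix (step 0) (prefix0s _).
elim: m => [|m IHm]; first exact: left_special_head.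
apply: left_special_prefix (left_special_phiw b_beta s_fixed IHm) _.
rewrite -[mapw _ _](s_fixed m.+1); apply: prefix_pref.
rewrite pref_S mapw_cons size_cat -addn2 addnC.
apply: leq_add; first exact: long.
rewrite -{1}(size_pref (shiftn 1 s) m) size_mapw //.
exact: nonerasing_phiw.
Qed.

Theorem standard_sturmian_b_beta : standard_sturmian s.
Proof.
apply: standard_sturmian_of_left_special => v; split; first exact: left_special_starts.
by move=> sv; rewrite -sv; apply: left_special_pref.
Qed.

End BBetaFixedPoint.

Definition keeps_first (c : bool) (g : gen) := ohead (phi g c) == Some c.
Definition conj_gen (c : bool) : gen -> gen := if c then Hg else Fg.

Lemma Hw_conj w : Hw w = map (conj_gen true) w.
Proof. by []. Qed.

Lemma Fw_conj w : Fw w = map (conj_gen false) w.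
Proof. by []. Qed.

Lemma phi_conj c g x : phi g c = c :: x ->
  forall p, x ++ mapw (phi g) p = mapw (phi (conj_gen c g)) p ++ x.
Proof.
move=> def_x; have letter e : x ++ phi g e = phi (conj_gen c g) e ++ x.
  by move: def_x; case: c; case: g => -[] // <-; case: e.
elim=> [|e p IHp]; first by rewrite cats0.
by rewrite !mapw_cons catA letter -catA IHp catA.
Qed.

Lemma phiw_conj c w : all (keeps_first c) w -> exists x, phiw w c = c :: x /\
  forall p, x ++ mapw (phiw w) p = mapw (phiw (map (conj_gen c) w)) p ++ x.
Proof.
elim: w => [|g w IHw]; first by exists [::]; split=> // p; rewrite cats0.
case/andP=> g_keeps /IHw[x [def_x conj_x]].
have [y def_y] : exists y, phi g c = c :: y.
  by move: g_keeps; rewrite /keeps_first; case: (phi g c) => // c' y /eqP[->]; exists y.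
exists (y ++ mapw (phi g) x); split; first by rewrite /= def_x mapw_cons def_y.
move=> p; rewrite !mapw_phiw_cons -catA -mapw_cat conj_x mapw_cat catA.
by rewrite (phi_conj def_y) -catA.
Qed.

Lemma shift_image f f' c x u : is_image f u u -> u 0 = c -> f c = c :: x ->
  (forall p, x ++ mapw f p = mapw f' p ++ x) -> is_image f' (shift u) (shift u).
Proof.
move=> uu u0 def_x conj_x n; have := uu n.+1.
by rewrite pref_S u0 mapw_cons def_x cat_cons conj_x => /starts_cons[_ /starts_cat[]].
Qed.

Lemma mpow_fixed f c k : f c = [:: c] -> mpow f k c = [:: c].
Proof.
by move=> fc; elim: k => // k IHk; rewrite /mpow iterS -/(mpow f k) IHk mapw_cons fc.
Qed.

Lemma primitive_moves w c : primitive (phiw w) -> has (moves c) w.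
Proof.
move=> [k prim]; apply: contraT => not_moves.
have fixed : phiw w c = [:: c].
  elim: w {prim} not_moves => //= g w IHw; rewrite negb_or => /andP[/negPn/eqP g_c /IHw ->].
  by rewrite mapw_cons g_c.
by have := prim c (~~ c); rewrite (mpow_fixed k fixed) inE; case: (c).
Qed.

Lemma has_moves_conj c c' w : has (moves c') (map (conj_gen c) w) = has (moves c') w.
Proof. by rewrite has_map; apply: eq_has => g; case: c; case: c'; case: g. Qed.

Lemma phiw_ohead (P : pred gen) c w :
    (forall g, P g -> keeps_first c g) ->
    (forall g e, P g -> moves (~~ c) g -> ohead (phi g e) = Some c) ->
  all P w -> has (moves (~~ c)) w -> forall e, ohead (phiw w e) = Some c.
Proof.
move=> keeps moving; elim: w => //= g w IHw /andP[Pg Pw] w_moves e.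
have := nonerasing_phiw w e; case def_p: (phiw w e) => [|e' p] // _.
rewrite mapw_cons; suff: ohead (phi g e') = Some c by case: (phi g e').
case/orP: w_moves => [g_moves | w_moves]; first exact: moving.
by move: (IHw Pw w_moves e); rewrite def_p => -[->]; apply/eqP/keeps.
Qed.

Section ShiftOfFixedPoint.

Variables (w : seq gen) (u : nat -> bool).
Hypothesis u_fixed : fixed_by (phiw w) u.

Lemma self_image : is_image (phiw w) u u.
Proof. exact/(fixed_byE _ (nonerasing_phiw w)). Qed.

Lemma fixed_by_shift c : all (keeps_first c) w -> u 0 = c ->
  fixed_by (phiw (map (conj_gen c) w)) (shift u).
Proof.
move=> w_keeps u0; have [x [def_x conj_x]] := phiw_conj w_keeps.
exact/(fixed_byE _ (nonerasing_phiw _))/(shift_image self_image u0 def_x conj_x).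
Qed.

Hypothesis prim : primitive (phiw w).

Lemma standard_sturmian_shift (P : pred gen) c :
    (forall g, P g -> keeps_first c g && in_b_beta (conj_gen c g)) ->
    (forall g e, P g -> moves (~~ c) g -> ohead (phi g e) = Some c) ->
  all P w -> standard_sturmian (shift u) /\ fixed_by (phiw (map (conj_gen c) w)) (shift u).
Proof.
move=> P_ok P_moves w_P.
have P_keeps g : P g -> keeps_first c g by case/P_ok/andP.
have u0 : u 0 = c.
  move: (is_image_head self_image) (phiw_ohead P_keeps P_moves w_P (primitive_moves _ prim) (u 0)).
  by case: (phiw w (u 0)) => // e p /starts_cons[-> _] [].
have fixed := fixed_by_shift (sub_all P_keeps w_P) u0; split=> //.
have b_beta : all in_b_beta (map (conj_gen c) w).
  by rewrite all_map; apply: sub_all w_P => g /P_ok/andP[].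
have moving c' : has (moves c') (map (conj_gen c) w).
  by rewrite has_moves_conj; apply: primitive_moves.
move/(fixed_byE _ (nonerasing_phiw _)): fixed b_beta moving.
case: (map _ w) => [_ _ /(_ true) // | g L] s_fixed b_beta moving.
exact: standard_sturmian_b_beta b_beta moving s_fixed.
Qed.

End ShiftOfFixedPoint.

Unset Implicit Arguments.

Theorem lemma26 (w : seq gen) (u : nat -> bool) :
  primitive (phiw w) -> substitution (phiw w) -> fixed_by (phiw w) u ->
  [/\ (all in_a_beta w ->
         standard_sturmian (shift u) /\ fixed_by (phiw (Hw w)) (shift u)),
      (all in_b_alpha w ->
         standard_sturmian (shift u) /\ fixed_by (phiw (Fw w)) (shift u)),
      (all in_a_alpha w -> u 0 = true -> fixed_by (phiw (Hw w)) (shift u))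
    & (all in_a_alpha w -> u 0 = false -> fixed_by (phiw (Fw w)) (shift u))].
Proof.
move=> prim _ u_fixed; split=> [w_ab | w_ba | w_aa u0 | w_aa u0].
- rewrite Hw_conj; apply: (standard_sturmian_shift u_fixed prim) w_ab.
    by case.
  by case=> -[].
- rewrite Fw_conj; apply: (standard_sturmian_shift u_fixed prim) w_ba.
    by case.
  by case=> -[].
- by rewrite Hw_conj; apply: (fixed_by_shift u_fixed) u0; apply: sub_all w_aa; case.
by rewrite Fw_conj; apply: (fixed_by_shift u_fixed) u0; apply: sub_all w_aa; case.
Qed.
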